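(* Let $n\ge1$ and let $G,G'$ be canonical weighted voting games on players $N=\{1,\dots,n\}$ such that $G'$ covers $G$ in the poset $(\mathcal{G}_{\mathsf{cwvg}}(n),\preceq_{\mathsf{MWC}})$, i.e., $W_{\min,G}\subset W_{\min,G'}$ and $|W_{\min,G'}|=|W_{\min,G}|+1$. Let $L_{\mathsf{ceil},G}$ be the set of ceiling coalitions of $G$. Then there exist $C\in L_{\mathsf{ceil},G}$ and an integer $i$ with $0\le i\le n$ such that $\mathsf{rtrunc}(C,i)$ is defined and $W_{\min,G'}=W_{\min,G}\cup\{\mathsf{rtrunc}(C,i)\}$.
   Context: A simple game on $N$ is a function $v:2^N\to\{0,1\}$ (all-losing allowed). $W_{\min,G}$ is the set of minimal winning coalitions (winning $S$ with every $S\setminus\{i\}$, $i\in S$, losing); maximal losing coalitions are losing $S$ with every $S\cup\{i\}$, $i\notin S$, winning. A weighted voting game has $q\ge0$, $w_i\ge0$ with $v(S)=1\iff\sum_{i\in S}w_i\ge q$. Write $i\succeq j$ if $v(S\cup\{i\})\ge v(S\cup\{j\})$ for all $S\subseteq N\setminus\{i,j\}$; a canonical weighted voting game is a weighted voting game with $1\succeq\cdots\succeq n$. A coalition $S'$ is a direct left-shift of $S$ if there is $i\in S$ with $2\le i\le n$, $i-1\notin S$ and $S'=(S\setminus\{i\})\cup\{i-1\}$; a left-shift of $S$ is a coalition obtained from $S$ by one or more successive direct left-shifts. A ceiling coalition is a maximal losing coalition all of whose left-shifts are winning. For a coalition $S$: $\mathsf{rtrunc}(S,0)=S$; for $0<i\le|S|$,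 $\mathsf{rtrunc}(S,i)$ is $S$ with its $i$ highest-numbered players removed; undefined for $i>|S|$. *)

(* Players N = {1,...,n} are represented by 'I_n
   (player k is the ordinal k-1; the order is preserved). *)
From HB Require Import structures.
From mathcomp Require Import all_boot all_order all_algebra.
From mathcomp Require Import reals.
Set Implicit Arguments. Unset Strict Implicit. Unset Printing Implicit Defensive.
Import Order.TTheory GRing.Theory Num.Theory.

(* A simple game on 'I_n : v : 2^N -> {0,1} (all-losing allowed). *)
Definition sgame (n : nat) := {set 'I_n} -> bool.

Definition is_wvg (R : realType) (n : nat) (v : sgame n) : Prop :=
  exists (q : R) (w : 'I_n -> R),
    (0 <= q)%R /\ (forall i, 0 <= w i)%R /\
    forall S : {set 'I_n}, v S = (q <= \sum_(i in S) w i)%R.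

Definition desir (n : nat) (v : sgame n) (i j : 'I_n) : Prop :=
  forall S : {set 'I_n}, i \notin S -> j \notin S -> v (j |: S) <= v (i |: S).

Definition is_cwvg (R : realType) (n : nat) (v : sgame n) : Prop :=
  is_wvg R v /\ forall i j : 'I_n, (i <= j)%N -> desir v i j.

Definition Wmin (n : nat) (v : sgame n) : {set {set 'I_n}} :=
  [set S : {set 'I_n} | v S && [forall i in S, ~~ v (S :\ i)]].

Definition max_losing (n : nat) (v : sgame n) (S : {set 'I_n}) : Prop :=
  ~~ v S /\ forall i : 'I_n, i \notin S -> v (i |: S).

Definition direct_left_shift (n : nat) (S S' : {set 'I_n}) : Prop :=
  exists i j : 'I_n, [/\ i \in S, j.+1 = i :> nat, j \notin S &
                        S' = j |: (S :\ i)].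

Inductive left_shift (n : nat) (S : {set 'I_n}) : {set 'I_n} -> Prop :=
| ls_one S' : direct_left_shift S S' -> left_shift S S'
| ls_step S1 S2 : left_shift S S1 -> direct_left_shift S1 S2 -> left_shift S S2.

Definition ceiling (n : nat) (v : sgame n) (C : {set 'I_n}) : Prop :=
  max_losing v C /\ forall C', left_shift C C' -> v C'.

(* rtrunc S i : remove the i highest-numbered players of S (meaningful
   for i <= #|S|; definedness is required separately). *)
Definition rtrunc (n : nat) (S : {set 'I_n}) (i : nat) : {set 'I_n} :=
  [set x in S | (i <= #|[set y in S | (x < y)%N]|)%N].

From HB Require Import structures.
From mathcomp Require Import all_boot all_order all_algebra.
From mathcomp Require Import reals.
From mathcomp Require Import zify.
Set Implicit Arguments. Unset Strict Implicit. Unset Printing Implicit Defensive.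
Import Order.TTheory GRing.Theory Num.Theory.

(* Let S be the unique minimal winning coalition of G' that is not one of G.
   S is losing in G, and a G'-winning coalition not containing S is already
   G-winning.  Among the G-losing supersets of S take C maximising the weight
   sum_{x in C} (n - x): adding a player or shifting one to the left raises
   this weight, so C is a ceiling coalition of G (a left shift of C either
   contains S, and wins by maximality, or wins in G' and hence in G).
   Desirability in G' forces every player of C outside S to come after every
   player of S, so S is C with its #|C :\: S| last players removed. *)

Definition monotone_game (n : nat) (v : sgame n) : Prop :=
  forall A B : {set 'I_n}, A \subset B -> v A -> v B.

Definition canonical_game (n : nat) (v : sgame n) : Prop :=
  forall i j : 'I_n, (i <= j)%N -> desir v i j.

Lemma wvg_monotone (R : realType) (n : nat) (v : sgame n) :
  is_wvg R v -> monotone_game v.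
Proof.
move=> [q [w [_ [w_ge0 vE]]]] A B sAB; rewrite !vE => /le_trans; apply.
rewrite [leRHS](big_setID A) /= (setIidPr sAB) lerDl.
by apply: sumr_ge0 => i _.
Qed.

Section SimpleGames.

Variables (n : nat) (v : sgame n).

Lemma Wmin_sub (Y : {set 'I_n}) :
  v Y -> exists2 Z : {set 'I_n}, Z \subset Y & Z \in Wmin v.
Proof.
move=> vY; have Y_ok : (Y \subset Y) && v Y by rewrite subxx.
have [Z /andP[sZY vZ] Zmin] :=
  @arg_minnP _ Y (fun Z => (Z \subset Y) && v Z) (fun Z => #|Z|) Y_ok.
exists Z => //; rewrite inE vZ; apply/forall_inP => i iZ; apply/negP => vZi.
have := Zmin (Z :\ i); rewrite vZi (subset_trans (subD1set Z i) sZY).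
by rewrite (cardsD1 i Z) iZ => /(_ isT); lia.
Qed.

Lemma Wmin_win (S : {set 'I_n}) : S \in Wmin v -> v S.
Proof. by rewrite inE => /andP[]. Qed.

Lemma Wmin_antichain (A B : {set 'I_n}) :
  monotone_game v -> A \in Wmin v -> B \in Wmin v -> A \subset B -> A = B.
Proof.
move=> mono AW BW sAB; apply/eqP; rewrite eqEsubset sAB /=.
apply/subsetP => i iB; apply/negPn/negP => iA.
move: BW; rewrite inE => /andP[_ /forall_inP /(_ i iB)]; apply/negP/negPn.
apply: mono (Wmin_win AW); apply/subsetP => x xA.
by rewrite !inE (subsetP sAB _ xA) andbT; apply: contraNneq iA => <-.
Qed.

Lemma desir_swap (i j : 'I_n) (S : {set 'I_n}) :
  desir v i j -> i \notin S -> j \in S -> v S -> v (i |: S :\ j).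
Proof.
move=> dij iS jS vS.
have := dij (S :\ j); rewrite setD1K // vS !inE eqxx (negbTE iS) andbF /=.
by rewrite lt0b; apply.
Qed.

Lemma direct_left_shift_win (X Y : {set 'I_n}) :
  canonical_game v -> direct_left_shift X Y -> v X -> v Y.
Proof.
move=> canv [i [j [iX ji jX ->]]]; apply: desir_swap => //.
by apply: canv; rewrite -ji.
Qed.

Lemma left_shift_win (X Y : {set 'I_n}) :
  canonical_game v -> (forall Z, direct_left_shift X Z -> v Z) ->
  left_shift X Y -> v Y.
Proof.
move=> canv shiftX; elim=> [Z /shiftX //|Y1 Y2 _ vY1 Y12].
exact: direct_left_shift_win canv Y12 vY1.
Qed.

End SimpleGames.

Definition left_weight (n : nat) (C : {set 'I_n}) : nat := \sum_(x in C) (n - x).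

Lemma left_weight_ltU1 (n : nat) (x : 'I_n) (C : {set 'I_n}) :
  x \notin C -> (left_weight C < left_weight (x |: C))%N.
Proof.
by move=> xC; rewrite /left_weight big_setU1 //=; have := ltn_ord x; lia.
Qed.

Lemma left_weight_direct_left_shift (n : nat) (C Y : {set 'I_n}) :
  direct_left_shift C Y -> (left_weight C < left_weight Y)%N.
Proof.
case=> [i [j [iC ji jC ->]]].
rewrite /left_weight big_setU1 /=; last by rewrite !inE (negbTE jC) andbF.
rewrite (big_setD1 i iC) /=; set s := (\sum_(_ in _) _).
have := ltn_ord i; lia.
Qed.

Lemma rtrunc_upper (n : nat) (S C : {set 'I_n}) :
  S \subset C -> {in C :\: S & S, forall x y : 'I_n, (y < x)%N} ->
  rtrunc C #|C :\: S| = S.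
Proof.
move=> sSC above; apply/setP => x; rewrite /rtrunc !inE.
have [xS|xS] := boolP (x \in S).
  rewrite (subsetP sSC _ xS) /=; apply: subset_leq_card; apply/subsetP => y.
  by rewrite !inE => /andP[yS yC]; rewrite yC above // inE yS.
have [xC|//] := boolP (x \in C); apply/negbTE; rewrite -ltnNge proper_card //.
apply/properP; split; last by exists x; rewrite !inE ?xS ?xC ?ltnn.
apply/subsetP => y; rewrite !inE => /andP[yC xy]; rewrite yC andbT.
by apply: contraTN xy => yS; rewrite -leqNgt ltnW // above // inE xS.
Qed.

Section CoveringPair.

Variables (n : nat) (G G' : sgame n) (S : {set 'I_n}).
Hypotheses (monoG : monotone_game G) (monoG' : monotone_game G').
Hypotheses (canG : canonical_game G) (canG' : canonical_game G').
Hypothesis WminG' : Wmin G' = Wmin G :|: [set S].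
Hypothesis S_notin_WminG : S \notin Wmin G.

Lemma win_new : G' S.
Proof. by apply: Wmin_win; rewrite WminG' in_setU in_set1 eqxx orbT. Qed.

Lemma win_without_new (Y : {set 'I_n}) :
  G' Y -> ~~ (S \subset Y) -> G Y.
Proof.
move=> /Wmin_sub [Z sZY]; rewrite WminG' in_setU in_set1 => /orP[ZW _|/eqP ZS].
  exact: monoG sZY (Wmin_win ZW).
by rewrite -ZS sZY.
Qed.

Lemma lose_new : ~~ G S.
Proof.
apply/negP => /Wmin_sub [Z sZS ZW].
have SW' : S \in Wmin G' by rewrite WminG' in_setU in_set1 eqxx orbT.
have ZW' : Z \in Wmin G' by rewrite WminG' in_setU ZW.
by move: S_notin_WminG; rewrite -(Wmin_antichain monoG' ZW' SW' sZS) ZW.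
Qed.

Lemma new_before_rest (C : {set 'I_n}) :
  S \subset C -> ~~ G C -> {in C :\: S & S, forall x y : 'I_n, (y < x)%N}.
Proof.
move=> sSC GC x y /setDP[xC xS] yS; rewrite ltnNge; apply/negP => xy.
have G'swap : G' (x |: S :\ y) by apply: desir_swap (canG' xy) xS yS win_new.
have swap_sub : x |: S :\ y \subset C.
  by rewrite subUset sub1set xC (subset_trans (subD1set S y)).
apply: (negP GC); apply: monoG swap_sub _; apply: win_without_new G'swap _.
apply/subsetP => /(_ y yS); rewrite !inE eqxx orbF.
by move=> /eqP yx; rewrite -yx yS in xS.
Qed.

Lemma ceiling_max_left_weight (C : {set 'I_n}) :
  S \subset C -> ~~ G C ->
  (forall D : {set 'I_n},
     S \subset D -> ~~ G D -> (left_weight D <= left_weight C)%N) ->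
  ceiling G C.
Proof.
move=> sSC GC Cmax.
have maxwin (D : {set 'I_n}) :
    S \subset D -> (left_weight C < left_weight D)%N -> G D.
  move=> sSD; rewrite ltnNge; apply: contraNT; exact: Cmax.
split.
  split=> // x xC; apply: maxwin (left_weight_ltU1 xC).
  exact: subset_trans sSC (subsetU1 x C).
move=> C'; apply: left_shift_win canG _ => Y CY.
have [sSY|nsSY] := boolP (S \subset Y).
  exact/maxwin/left_weight_direct_left_shift.
apply: win_without_new nsSY; apply: direct_left_shift_win canG' CY _.
exact: monoG' sSC win_new.
Qed.

Lemma exists_ceiling_over_new :
  exists C, [/\ ceiling G C, S \subset C &
                {in C :\: S & S, forall x y : 'I_n, (y < x)%N}].
Proof.
have S_ok : (S \subset S) && ~~ G S by rewrite subxx lose_new.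
have [C /andP[sSC GC] Cmax] :=
  @arg_maxnP _ S (fun C => (S \subset C) && ~~ G C) (@left_weight n) S_ok.
exists C; split=> //; last exact: new_before_rest.
by apply: ceiling_max_left_weight => // D sSD GD; apply: Cmax; apply/andP.
Qed.

End CoveringPair.

Theorem theorem10 (R : realType) (n : nat) (G G' : {set 'I_n} -> bool) :
  (0 < n)%N ->
  is_cwvg R G -> is_cwvg R G' ->
  Wmin G \proper Wmin G' -> #|Wmin G'| = (#|Wmin G|).+1 ->
  exists (C : {set 'I_n}) (i : nat),
    [/\ ceiling G C, (i <= n)%N, (i <= #|C|)%N &
        Wmin G' = Wmin G :|: [set rtrunc C i]].
Proof.
move=> _ [/wvg_monotone monoG canG] [/wvg_monotone monoG' canG'].
move=> /properP[sub _] card_cover.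
have /cards1P[S newS] : #|Wmin G' :\: Wmin G| == 1.
  by rewrite cardsD (setIidPr sub) card_cover subSnn.
have S_notin : S \notin Wmin G by have := set11 S; rewrite -newS inE => /andP[].
have WminG' : Wmin G' = Wmin G :|: [set S].
  by rewrite -newS setDE setUIr setUCr setIT (setUidPr sub).
have [C [ceilC sSC above]] :=
  exists_ceiling_over_new monoG monoG' canG canG' WminG' S_notin.
have card_le : (#|C :\: S| <= #|C|)%N by exact/subset_leq_card/subsetDl.
exists C, #|C :\: S|; split=> //; last by rewrite rtrunc_upper.
by rewrite (leq_trans card_le) // (leq_trans (max_card _)) ?card_ord.
Qed.
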